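(* Let $u$ be implemented by a network of depth $\mathcal D$ and width $\mathcal W$ with activations in $\{\mathrm{ReLU}^2,\mathrm{ReLU}^3\}$ (respectively in $\{\mathrm{ReLU}^3\}$). Then for each $i=1,\dots,d$, the partial derivative $D_iu$ is implemented by a network of depth $\mathcal D+2$ and width at most $(\mathcal D+2)\mathcal W$ with activations in $\{\mathrm{ReLU},\mathrm{ReLU}^2,\mathrm{ReLU}^3\}$ (respectively in $\{\mathrm{ReLU}^2,\mathrm{ReLU}^3\}$). Moreover, the networks implementing $D_1u,\dots,D_du$ can be chosen with the same architecture.
   Context: $\mathrm{ReLU}^k(x)=(\max\{x,0\})^k$ for $k\ge1$. A function $u:\mathbb R^d\to\mathbb R$ is implemented by a network of depth $\mathcal D$ and width $\mathcal W$ with activations in $\Phi$ if there are $n_0=d,n_1,\dots,n_{\mathcal D}=1$ with $\max_\ell n_\ell\le\mathcal W$, $A_\ell\in\mathbb R^{n_\ell\times n_{\ell-1}}$, $b_\ell\in\mathbb R^{n_\ell}$, such that $f_0=x$, $(f_\ell)_q=\rho^{(\ell)}_q((A_\ell f_{\ell-1}+b_\ell)_q)$ for $\ell=1,\dots,\mathcal D-1$ with each $\rho^{(\ell)}_q\in\Phi$, and $u=A_{\mathcal D}f_{\mathcal D-1}+b_{\mathcal D}$. ''Same architecture'' means the same depth, layer sizes and assignment of activation functions to units (only the weights differ). *)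

From HB Require Import structures.
From mathcomp Require Import all_boot all_order all_algebra.
From mathcomp Require Import all_classical all_reals all_analysis.
 Unset Printing Implicit Defensive.
Import Order.TTheory GRing.Theory Num.Theory.
Import numFieldNormedType.Exports.
Local Open Scope ring_scope.

Definition reluk {R : realType} (k : nat) (x : R) : R := (Num.max x 0) ^+ k.

(* Hidden-layer values f_l of a network.
   n l        : size of layer l (n 0 = d input, n D = 1 output)
   rho l q    : exponent k of the activation ReLU^k used at unit q of layer l
   A l q p    : entry (q,p) of the weight matrix A_l (only q < n l, p < n (l-1) used)
   b l q      : entry q of the bias b_l *)
Fixpoint net_layer {R : realType} (n : nat -> nat) (rho : nat -> nat -> nat)
  (A : nat -> nat -> nat -> R) (b : nat -> nat -> R) (x : nat -> R) (l : nat)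
  : nat -> R :=
  match l with
  | 0 => x
  | l'.+1 => fun q =>
      reluk (rho l q)
        (\sum_(p < n l') A l q p * net_layer n rho A b x l' p + b l q)
  end.

Definition net_out {R : realType} (D : nat) (n : nat -> nat)
  (rho : nat -> nat -> nat) (A : nat -> nat -> nat -> R) (b : nat -> nat -> R)
  (x : nat -> R) : R :=
  \sum_(p < n D.-1) A D 0%N p * net_layer n rho A b x D.-1 p + b D 0%N.

Definition coords {R : realType} {d : nat} (x : 'rV[R]_d) : nat -> R :=
  fun i => if @insub nat (fun k => (k < d)%N) 'I_d i is Some j then x ord0 j else 0.

(* u : R^d -> R is implemented by a network of depth D and width W with
   activations in Phi (given as the set of exponents k of ReLU^k), with the
   architecture (layer sizes n, activation assignment rho). *)
Definition implements_with {R : realType} (d D W : nat) (Phi : seq nat)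
  (n : nat -> nat) (rho : nat -> nat -> nat) (u : 'rV[R]_d -> R) : Prop :=
  (0 < D)%N /\ n 0%N = d /\ n D = 1%N /\
      (forall l, (l <= D)%N -> (n l <= W)%N) /\
      (forall l q, (1 <= l < D)%N -> (q < n l)%N -> rho l q \in Phi) /\
      (exists (A : nat -> nat -> nat -> R) (b : nat -> nat -> R),
        forall x, u x = net_out D n rho A b (coords x)).

Definition implements {R : realType} (d D W : nat) (Phi : seq nat)
  (u : 'rV[R]_d -> R) : Prop :=
  exists n rho, @implements_with R d D W Phi n rho u.

Definition partial {R : realType} {d : nat} (i : 'I_d) (u : 'rV[R]_d -> R)
  : 'rV[R]_d -> R :=
  fun x => 'D_(delta_mx 0 i) u x.

(* Differentiate the network forward along e_i.  With pre-activations z_l and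
   g_l the derivative of layer l, g_0 = e_i and g_l = k ReLU^(k-1)(z_l) * h_l with
   h_l = A_l g_(l-1), so that D_i u = A_D g_(D-1).  Since ReLU^2(t) + ReLU^2(-t) = t^2,
   a product a * h is the fixed linear combination
   (ReLU^2(a+h) + ReLU^2(-a-h) - ReLU^2(a-h) - ReLU^2(h-a)) / 4.  So layer l of the
   new network carries f_l (to continue the forward pass), ReLU^(k-1)(z_l), and the
   four ReLU^2 units of a = ReLU^(k-1)(z_(l-1)) and h = h_(l-1), of which
   g_(l-1) is a linear combination; h_1 = A_1 e_i enters as a bias.  Two more layers produce
   D_i u = (D_i u) * 1 in the same way.  Only weights and biases depend on i, and
   activations k in {2,3} are replaced by k and k - 1.  A network of depth one is
   affine, with constant derivative. *)

From mathcomp Require Import all_boot all_order all_algebra.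
From mathcomp Require Import all_classical all_reals all_analysis.
From mathcomp Require Import zify ring lra.
Import Order.TTheory GRing.Theory Num.Theory.
Import numFieldNormedType.Exports.
Local Open Scope ring_scope.

Section ReluDerivative.
Context {R : realType}.

Lemma reluk_ge0 k (y : R) : 0 <= y -> reluk k y = y ^+ k.
Proof. by move=> y0; rewrite /reluk max_l. Qed.

Lemma reluk_le0 k (y : R) : y <= 0 -> reluk k y = 0 ^+ k.
Proof. by move=> y0; rewrite /reluk max_r. Qed.

Lemma continuous_reluk k : continuous (@reluk R k).
Proof.
move=> y; rewrite /reluk.
apply: (@continuous_comp _ _ _ (fun t : R => Num.max t 0) (fun t => t ^+ k)).
  by apply: continuous_max => //; exact: cvg_cst.
exact: exprn_continuous.
Qed.

Lemma reluk_divl k (h : R) : h != 0 -> h^-1 * reluk k.+2 h = reluk k.+1 h.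
Proof.
move=> h0; have [hge0|hle0] := leP 0 h.
  by rewrite !reluk_ge0 // exprS mulKf.
by rewrite !reluk_le0 ?ltW // !expr0n mulr0.
Qed.

(* Away from 0, [reluk k] agrees near [y] with [t ^+ k] or with [0]; at 0 its
   difference quotient is [reluk k.-1], which is continuous and vanishes at 0. *)
Lemma is_derive_reluk k (y : R) : (2 <= k)%N ->
  is_derive y 1 (@reluk R k) (k%:R * reluk k.-1 y).
Proof.
case: k => [|[|k]] // _ /=.
have [yneg|ypos|->] := ltgtP y 0.
- rewrite reluk_le0 ?ltW // expr0n mulr0.
  apply: (@near_eq_is_derive _ _ _ (cst 0)).
  have : y \in `]-oo, 0[ by rewrite in_itv.
  move/near_in_itvNyo; apply: filterS => t; rewrite in_itv /= => t0.
  by rewrite reluk_le0 ?ltW // expr0n.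
- rewrite reluk_ge0 ?ltW //.
  apply: (@near_eq_is_derive _ _ _ (@id R ^+ k.+2)); last first.
    by apply: is_derive_eq; rewrite [_%:A]mulr1.
  have : y \in `]0, +oo[ by rewrite in_itv /= ypos.
  move/near_in_itvoy; apply: filterS => t; rewrite in_itv /= andbT => t0.
  by rewrite reluk_ge0 ?ltW // exprfctE.
- have reluk0 j : reluk j.+1 (0 : R) = 0 by rewrite reluk_le0 // expr0n.
  have quotient : ((fun h : R => h^-1 *: ((@reluk R k.+2 \o shift 0) (h *: 1)
                    - reluk k.+2 0)) @ 0^' --> (0 : R))%classic.
    apply: (@cvg_trans _ (@reluk R k.+1 @ 0^')%classic); last first.
      have := continuous_reluk k.+1 (0 : R); rewrite /continuous_at reluk0.
      exact: cvg_trans (cvg_app _ (cvg_within _)).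
    apply: near_eq_cvg; near=> h.
    rewrite /= /shift addr0 reluk0 subr0 [h *: 1]mulr1 [_ *: _]reluk_divl //.
    by near: h; exact: nbhs_dnbhs_neq.
  rewrite reluk0 mulr0; apply: DeriveDef; first exact: (cvgP _ quotient).
  exact: cvg_lim quotient.
Unshelve. all: by end_near.
Qed.

End ReluDerivative.

Section DerivativeAlongLine.
Context {R : realType}.

Lemma derive_along_line (V : normedModType R) (f : V -> R) (x v : V) (df : R) :
  is_derive (0 : R) 1 (fun t : R => f (t *: v + x)) df -> 'D_v f x = df.
Proof.
move=> [_ <-]; rewrite /derive.
suff -> : (fun h : R => h^-1 *: ((f \o shift x) (h *: v) - f x)) =
  (fun h : R => h^-1 *: (((fun t => f (t *: v + x)) \o shift 0) (h *: 1)
                         - f (0 *: v + x))) by [].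
apply: funext => h /=.
by rewrite /shift scale0r !add0r addr0 [h *: 1]mulr1.
Qed.

Lemma is_derive_affine_comb N (a : 'I_N -> R) (F : 'I_N -> R -> R)
    (dF : 'I_N -> R) (c x : R) :
  (forall p, is_derive x 1 (F p) (dF p)) ->
  is_derive x 1 (fun t => \sum_(p < N) a p * F p t + c) (\sum_(p < N) a p * dF p).
Proof.
move=> dFp.
have term p : is_derive x 1 (fun t => a p * F p t) (a p * dF p).
  exact: is_deriveZ.
have := is_deriveD (is_derive_sum term) (is_derive_cst c x 1).
rewrite addr0; congr is_derive; apply: funext => t.
by rewrite /= fct_sumE.
Qed.

End DerivativeAlongLine.

Section NetworkDerivative.
Context {R : realType}.
Variables (n : nat -> nat) (rho : nat -> nat -> nat)
  (A : nat -> nat -> nat -> R) (b : nat -> nat -> R).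

Definition line (x e : nat -> R) (t : R) : nat -> R := fun p => x p + t * e p.

Lemma net_layerS x l q : net_layer n rho A b x l.+1 q =
  reluk (rho l.+1 q) (\sum_(p < n l) A l.+1 q p * net_layer n rho A b x l p + b l.+1 q).
Proof. by []. Qed.

Definition preact (x : nat -> R) (l q : nat) : R :=
  \sum_(p < n l.-1) A l q p * net_layer n rho A b x l.-1 p + b l q.

Definition lower_act (x : nat -> R) (l q : nat) : R := reluk (rho l q).-1 (preact x l q).

Fixpoint tangent (x e : nat -> R) (l : nat) : nat -> R :=
  match l with
  | 0 => e
  | l'.+1 => fun q => (rho l q)%:R * lower_act x l q *
                     \sum_(p < n l') A l q p * tangent x e l' p
  end.

Definition tangent_pre (x e : nat -> R) (l q : nat) : R :=
  \sum_(p < n l.-1) A l q p * tangent x e l.-1 p.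

Lemma tangentS x e l q :
  tangent x e l.+1 q = (rho l.+1 q)%:R * lower_act x l.+1 q * tangent_pre x e l.+1 q.
Proof. by []. Qed.

Lemma line0 x e : line x e 0 = x.
Proof. by apply: funext => p; rewrite /line mul0r addr0. Qed.

Lemma is_derive_net_layer x e l :
  (forall l' q, (1 <= l' <= l)%N -> (q < n l')%N -> (2 <= rho l' q)%N) ->
  forall q, (q < n l)%N ->
  is_derive (0 : R) 1 (fun t => net_layer n rho A b (line x e t) l q) (tangent x e l q).
Proof.
elim: l => [|l IHl] rho_ge2 q qlt /=.
  have := is_deriveD (@is_derive_cst R R R (x q) 0 1)
    (@is_deriveM R R id (cst (e q)) 0 1 1 0 (is_derive_id _ _) (is_derive_cst _ _ _)).
  by move/is_derive_eq; apply; rewrite /= scaler0 !add0r [_%:A]mulr1.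
have dpre : is_derive (0 : R) 1 (fun t => preact (line x e t) l.+1 q)
    (\sum_(p < n l) A l.+1 q p * tangent x e l p).
  apply: is_derive_affine_comb => p; apply: IHl => // l' q' /andP[l'1 l'l].
  by apply: rho_ge2; rewrite l'1 ltnW.
have rho_q : (2 <= rho l.+1 q)%N by apply: rho_ge2; rewrite ?leqnn.
have := is_derive1_comp (is_derive_reluk _ _ rho_q) dpre.
by rewrite line0.
Qed.

Definition std_basis (i : nat) : nat -> R := fun p => (p == i)%:R.

Lemma coords_line d (i : 'I_d) (y : 'rV[R]_d) (t : R) :
  coords (t *: delta_mx 0 i + y) = line (coords y) (std_basis i) t.
Proof.
apply: funext => p; rewrite /line /coords /std_basis.
case: insubP => [j _ <-|pge]; first by rewrite !mxE addrC.
by case: eqP => [pi|]; [rewrite pi ltn_ord in pge | rewrite mulr0 addr0].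
Qed.

Lemma partial_net_out d D (u : 'rV[R]_d -> R) (i : 'I_d) (y : 'rV[R]_d) :
  (forall z, u z = net_out D n rho A b (coords z)) ->
  (forall l q, (1 <= l <= D.-1)%N -> (q < n l)%N -> (2 <= rho l q)%N) ->
  partial i u y = tangent_pre (coords y) (std_basis i) D 0.
Proof.
move=> u_net rho_ge2; apply: derive_along_line.
under eq_fun do rewrite u_net coords_line /net_out.
apply: is_derive_affine_comb => p.
by apply: is_derive_net_layer => // l q /andP[l1 lD]; apply: rho_ge2; rewrite l1.
Qed.

Lemma tangent_pre1_basis x i r : (i < n 0)%N -> tangent_pre x (std_basis i) 1 r = A 1 r i.
Proof.
move=> i_lt; rewrite /tangent_pre /= (bigD1 (Ordinal i_lt)) //= /std_basis eqxx mulr1.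
rewrite big1 ?addr0 // => p /eqP pi; case: eqP => [pi'|_]; last by rewrite mulr0.
by case: pi; apply: val_inj.
Qed.

End NetworkDerivative.

Lemma divn_block r j k : (j < k)%N -> ((r * k + j) %/ k = r)%N.
Proof. by move=> jk; rewrite divnMDl ?(leq_ltn_trans (leq0n j)) // divn_small ?addn0. Qed.

Lemma modn_block r j k : (j < k)%N -> ((r * k + j) %% k = j)%N.
Proof. by move=> jk; rewrite modnMDl modn_small. Qed.

Section BlockSums.
Context {R : pzSemiRingType}.
Implicit Types (w G : nat -> R) (F : nat -> R).

Lemma sum_ord_mul F K m :
  \sum_(p < K * m) F p = \sum_(r < K) \sum_(j < m) F (r * m + j)%N.
Proof.
elim: K => [|K IHK]; first by rewrite !big_ord0.
by rewrite mulSnr big_split_ord IHK big_ord_recr.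
Qed.

Lemma sum_ord_restrict w G N M : (N <= M)%N ->
  \sum_(p < M) (if (p < N)%N then w p else 0) * G p = \sum_(p < N) w p * G p.
Proof.
move=> /subnKC <-; rewrite big_split_ord /= [X in _ + X]big1 ?addr0.
  by apply: eq_bigr => p _; rewrite ltn_ord.
by move=> p _; rewrite ltnNge leq_addr mul0r.
Qed.

Lemma sum_ord_shift w G off K :
  \sum_(p < off + K) (if (off <= p)%N then w (p - off)%N else 0) * G p =
  \sum_(p < K) w p * G (off + p)%N.
Proof.
rewrite big_split_ord /= big1 ?add0r => [|p _]; last by rewrite leqNgt ltn_ord mul0r.
by apply: eq_bigr => p _; rewrite leq_addr addKn.
Qed.

Lemma sum_ord_pick (c : R) G r M : (r < M)%N ->
  \sum_(p < M) (if p == r :> nat then c else 0) * G p = c * G r.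
Proof.
move=> rM; rewrite (bigD1 (Ordinal rM)) //= eqxx big1 ?addr0 // => p pr.
by rewrite ifN ?mul0r //; apply: contra pr => /eqP pr; apply/eqP/val_inj.
Qed.

End BlockSums.

Section Polarization.
Context {R : realType}.

Definition relu2 : R -> R := reluk 2.

Definition polar_a (j : nat) : R := if odd j then -1 else 1.
Definition polar_h (j : nat) : R := if (j == 0%N) || (j == 3%N) then 1 else -1.
Definition polar_sign (j : nat) : R := if (j < 2)%N then 1 else -1.

Lemma relu2_addN t : relu2 t + relu2 (- t) = t ^+ 2.
Proof.
rewrite /relu2; have [t0|t0] := leP 0 t.
  by rewrite reluk_ge0 // reluk_le0 ?oppr_le0 // expr0n addr0.
by rewrite reluk_le0 ?ltW // reluk_ge0 ?oppr_ge0 ?ltW // expr0n add0r sqrrN.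
Qed.

(* [(a + h)^2 - (a - h)^2 = 4 a h], each square split as in [relu2_addN]. *)
Lemma polarization a h :
  \sum_(j < 4) polar_sign j * relu2 (polar_a j * a + polar_h j * h) = 4 * (a * h).
Proof.
have Esum := relu2_addN (a + h); have Ediff := relu2_addN (a - h).
rewrite opprD in Esum; rewrite opprB [h - a]addrC in Ediff.
rewrite !big_ord_recr big_ord0 /= /polar_sign /polar_a /polar_h /= !mul1r !mulN1r.
lra.
Qed.

End Polarization.

Ltac case_ifs := repeat (case: ifPn => ?; try (exfalso; lia)).

Section DerivativeNetwork.
Context {R : realType}.
Variables (D : nat) (n : nat -> nat) (rho : nat -> nat -> nat)
  (A : nat -> nat -> nat -> R) (b : nat -> nat -> R) (i : nat).

(* For 1 <= l <= D, layer l of the derivative network is made of three blocks: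
   the hidden units of layer l of the given network (needed up to l = D - 2), the
   units ReLU^(k-1) of its pre-activations (up to l = D - 1), and, for l >= 2, one
   group of four units per unit of layer l - 1, described by [prod_spec].  Layer
   D + 1 consists of the four polarization units of (D_i u) * 1, and layer D + 2 is
   the output. *)
Definition ncopy l := if (l.+2 <= D)%N then n l else 0%N.
Definition nlower l := if (l < D)%N then n l else 0%N.
Definition nprod l := if (2 <= l)%N then n l.-1 else 0%N.
Definition prod_offset l := (ncopy l + nlower l)%N.

Definition dnet_size l :=
  if l == 0%N then n 0
  else if (l <= D)%N then (prod_offset l + nprod l * 4)%N
  else if l == D.+1 then 4%N else 1%N.

Definition dnet_rho l q :=
  if (1 <= l <= D)%N then
    if (q < ncopy l)%N then rho l q
    else if (q < prod_offset l)%N then (rho l (q - ncopy l)).-1 else 2%N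
  else 2%N.

(* Weight of unit [p] of the product block of layer [l] in [tangent_pre l r]. *)
Definition readout l r p : R :=
  A l r (p %/ 4) * (rho l.-1 (p %/ 4))%:R / 4 * polar_sign (p %% 4).

Definition dnet_weight l q p : R :=
  if (l <= D)%N then
    if (q < ncopy l)%N then (if (p < ncopy l.-1)%N then A l q p else 0)
    else if (q < prod_offset l)%N then
      (if (p < ncopy l.-1)%N then A l (q - ncopy l) p else 0)
    else
      let r := ((q - prod_offset l) %/ 4)%N in let j := ((q - prod_offset l) %% 4)%N in
      (if p == (ncopy l.-1 + r)%N then polar_a j else 0) +
      (if (3 <= l)%N && (prod_offset l.-1 <= p)%N then
         polar_h j * readout l.-1 r (p - prod_offset l.-1) else 0)
  else if l == D.+1 then
    (if (prod_offset D <= p)%N then polar_a q * readout D 0 (p - prod_offset D) else 0)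
  else polar_sign p / 4.

Definition dnet_bias l q : R :=
  if (l <= D)%N then
    if (q < ncopy l)%N then b l q
    else if (q < prod_offset l)%N then b l (q - ncopy l)
    else if l == 2%N then
      polar_h ((q - prod_offset l) %% 4) * A 1 ((q - prod_offset l) %/ 4) i
    else 0
  else if l == D.+1 then polar_h q else 0.

Hypothesis D_ge2 : (2 <= D)%N.
Hypothesis i_lt : (i < n 0)%N.
Variable x : nat -> R.

Local Notation f := (net_layer n rho A b x).
Local Notation NN := (net_layer dnet_size dnet_rho dnet_weight dnet_bias x).
Local Notation e := (@std_basis R i).
Local Notation lower := (lower_act n rho A b x).
Local Notation tan := (tangent n rho A b x e).
Local Notation tan_pre := (tangent_pre n rho A b x e).

Lemma dnet_sizeE m : (1 <= m <= D)%N -> dnet_size m = (prod_offset m + nprod m * 4)%N.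
Proof. by case/andP=> m1 mD; rewrite /dnet_size mD; case: m m1 mD. Qed.

Lemma ncopyE m : (m.+2 <= D)%N -> ncopy m = n m.
Proof. by rewrite /ncopy => ->. Qed.

Lemma ncopy_le_size m : (m <= D)%N -> (ncopy m <= dnet_size m)%N.
Proof.
move=> mD; have [->|m1] := posnP m; first by rewrite /ncopy /dnet_size; case_ifs.
by rewrite dnet_sizeE ?m1 // /prod_offset -addnA leq_addr.
Qed.

Lemma sum_copy_block m (w : nat -> R) : (m.+2 <= D)%N ->
  (forall q, (q < ncopy m)%N -> NN m q = f m q) ->
  \sum_(p < dnet_size m) (if (p < ncopy m)%N then w p else 0) * NN m p =
  \sum_(p < n m) w p * f m p.
Proof.
move=> mD copy_m; rewrite sum_ord_restrict; last by apply: ncopy_le_size; lia.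
by rewrite ncopyE //; apply: eq_bigr => p _; rewrite copy_m ?ncopyE.
Qed.

Lemma dnet_rho_copy l q : (1 <= l <= D)%N -> (q < ncopy l)%N -> dnet_rho l q = rho l q.
Proof. by rewrite /dnet_rho => -> ->. Qed.

Lemma dnet_bias_copy l q : (l <= D)%N -> (q < ncopy l)%N -> dnet_bias l q = b l q.
Proof. by rewrite /dnet_bias => -> ->. Qed.

Lemma dnet_weight_copy l q p : (l <= D)%N -> (q < ncopy l)%N ->
  dnet_weight l q p = if (p < ncopy l.-1)%N then A l q p else 0.
Proof. by rewrite /dnet_weight => -> ->. Qed.

Lemma dnet_rho_lower l r : (1 <= l <= D)%N -> (r < nlower l)%N ->
  dnet_rho l (ncopy l + r) = (rho l r).-1.
Proof.
by move=> lD rlt; rewrite /dnet_rho /prod_offset; case_ifs; rewrite addKn.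
Qed.

Lemma dnet_bias_lower l r : (l <= D)%N -> (r < nlower l)%N ->
  dnet_bias l (ncopy l + r) = b l r.
Proof.
by move=> lD rlt; rewrite /dnet_bias /prod_offset; case_ifs; rewrite addKn.
Qed.

Lemma dnet_weight_lower l r p : (l <= D)%N -> (r < nlower l)%N ->
  dnet_weight l (ncopy l + r) p = if (p < ncopy l.-1)%N then A l r p else 0.
Proof.
by move=> lD rlt; rewrite /dnet_weight /prod_offset; case_ifs; rewrite ?addKn.
Qed.

Lemma prod_index_ltF l k :
  (prod_offset l + k < ncopy l)%N = false /\ (prod_offset l + k < prod_offset l)%N = false.
Proof. by rewrite /prod_offset; split; apply/negbTE; lia. Qed.

Lemma dnet_rho_prod l k : dnet_rho l (prod_offset l + k) = 2%N.
Proof. by have [lt1 lt2] := prod_index_ltF l k; rewrite /dnet_rho lt1 lt2; case: ifP. Qed.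

Lemma dnet_weight_prod l r j p : (l <= D)%N -> (j < 4)%N ->
  dnet_weight l (prod_offset l + (r * 4 + j)) p =
  (if p == (ncopy l.-1 + r)%N then polar_a j else 0) +
  (if (3 <= l)%N && (prod_offset l.-1 <= p)%N then
     polar_h j * readout l.-1 r (p - prod_offset l.-1) else 0).
Proof.
move=> lD j4; have [lt1 lt2] := prod_index_ltF l (r * 4 + j).
by rewrite /dnet_weight lD lt1 lt2 /= addKn divn_block ?modn_block.
Qed.

Lemma dnet_bias_prod l r j : (l <= D)%N -> (j < 4)%N ->
  dnet_bias l (prod_offset l + (r * 4 + j)) = if l == 2%N then polar_h j * A 1 r i else 0.
Proof.
move=> lD j4; have [lt1 lt2] := prod_index_ltF l (r * 4 + j).
by rewrite /dnet_bias lD lt1 lt2 /= addKn divn_block ?modn_block.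
Qed.

Lemma dnet_copy m : (forall q, (q < ncopy m)%N -> NN m q = f m q) ->
  forall q, (q < ncopy m.+1)%N -> NN m.+1 q = f m.+1 q.
Proof.
move=> copy_m q qlt; have mD : (m.+3 <= D)%N by move: qlt; rewrite /ncopy; case: ifP.
have [mD1 mD2] : (1 <= m.+1 <= D)%N /\ (m.+1 <= D)%N by split; lia.
rewrite /= dnet_rho_copy // dnet_bias_copy // -sum_copy_block ?(ltnW mD) //.
by congr (reluk _ (_ + _)); apply: eq_bigr => p _; rewrite dnet_weight_copy.
Qed.

Lemma dnet_lower m : (forall q, (q < ncopy m)%N -> NN m q = f m q) ->
  forall r, (r < nlower m.+1)%N -> NN m.+1 (ncopy m.+1 + r) = lower m.+1 r.
Proof.
move=> copy_m r rlt; have mD : (m.+2 <= D)%N by move: rlt; rewrite /nlower; case: ifP.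
have [mD1 mD2] : (1 <= m.+1 <= D)%N /\ (m.+1 <= D)%N by split; lia.
rewrite /= dnet_rho_lower // dnet_bias_lower // /lower_act /preact /= -sum_copy_block //.
by congr (reluk _ (_ + _)); apply: eq_bigr => p _; rewrite dnet_weight_lower.
Qed.

Lemma dnet_copy_all m q : (q < ncopy m)%N -> NN m q = f m q.
Proof. by elim: m q => [//|m IHm]; apply: dnet_copy. Qed.

Definition prod_spec m := forall r j, (r < nprod m)%N -> (j < 4)%N ->
  NN m (prod_offset m + (r * 4 + j)) =
  relu2 (polar_a j * lower m.-1 r +
           polar_h j * tan_pre m.-1 r).

Lemma tangent_readout m r : (2 <= m)%N -> prod_spec m -> (r < n m.-1)%N ->
  (rho m.-1 r)%:R / 4 * \sum_(j < 4) polar_sign j * NN m (prod_offset m + (r * 4 + j)) =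
  tan m.-1 r.
Proof.
move=> m2 spec_m rlt; have rlt' : (r < nprod m)%N by rewrite /nprod m2.
under eq_bigr => j _ do rewrite spec_m ?ltn_ord //.
rewrite polarization; case: m m2 {spec_m} rlt rlt' => [|[|m]] // _ _ _.
by rewrite tangentS; field.
Qed.

Lemma sum_readout m r (c : R) : (2 <= m <= D)%N -> prod_spec m ->
  \sum_(p < dnet_size m)
     (if (prod_offset m <= p)%N then c * readout m r (p - prod_offset m) else 0) * NN m p =
  c * tan_pre m r.
Proof.
move=> /andP[m2 mD] spec_m.
rewrite dnet_sizeE ?mD ?(leq_trans _ m2) // (sum_ord_shift (fun k => c * readout m r k)).
rewrite /nprod m2 (sum_ord_mul (fun p => c * readout m r p * NN m (prod_offset m + p))).
rewrite /tangent_pre mulr_sumr; apply: eq_bigr => r' _.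
rewrite -tangent_readout // !mulr_sumr; apply: eq_bigr => j _.
by rewrite /readout divn_block ?modn_block //; ring.
Qed.

Lemma dnet_prod m : (1 <= m)%N -> (m < D)%N ->
  (forall r, (r < nlower m)%N -> NN m (ncopy m + r) = lower m r) ->
  prod_spec m -> prod_spec m.+1.
Proof.
move=> m1 mD lower_m spec_m r j rlt j4.
have r_lower : (r < nlower m)%N by move: rlt; rewrite /nprod /nlower ltnS m1 mD.
have r_size : (ncopy m + r < dnet_size m)%N.
  by rewrite dnet_sizeE ?m1 ?(ltnW mD) // /prod_offset -addnA ltn_add2l ltn_addr.
rewrite net_layerS dnet_rho_prod dnet_bias_prod //.
under eq_bigr => p _ do rewrite dnet_weight_prod // mulrDl.
rewrite big_split /= sum_ord_pick // lower_m // -addrA.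
congr (reluk 2 (_ + _)); have [m2|m_le1] := ltnP 1 m.
  rewrite eqSS gtn_eqF // addr0 ltnS m2 sum_readout //.
  by rewrite m2 ltnW.
have -> : m = 1%N by apply/eqP; rewrite eqn_leq m_le1 m1.
by rewrite big1 ?add0r ?tangent_pre1_basis // => p _; rewrite mul0r.
Qed.

Lemma dnet_prod_all m : (m <= D)%N -> prod_spec m.
Proof.
elim: m => [_ r j|m IHm mD]; first by rewrite /nprod.
have [->|m1] := posnP m; first by move=> r j; rewrite /nprod.
apply: dnet_prod => //; last exact/IHm/ltnW.
by case: m m1 {IHm mD} => // m _ r; apply: dnet_lower => q; apply: dnet_copy_all.
Qed.

Lemma dnet_output_layer j : (j < 4)%N ->
  NN D.+1 j = relu2 (polar_a j * tan_pre D 0 + polar_h j * 1).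
Proof.
move=> j4; have rhoE : dnet_rho D.+1 j = 2%N by rewrite /dnet_rho ltnn andbF.
have biasE : dnet_bias D.+1 j = polar_h j by rewrite /dnet_bias ltnn eqxx.
rewrite net_layerS rhoE biasE mulr1.
rewrite (eq_bigr (fun p : 'I_(dnet_size D) => (if (prod_offset D <= p)%N then
    polar_a j * readout D 0 (p - prod_offset D) else 0) * NN D p)); last first.
  by move=> p _; rewrite /dnet_weight ltnn eqxx.
rewrite sum_readout //; last exact: dnet_prod_all.
by rewrite D_ge2 leqnn.
Qed.

Lemma dnet_out : net_out D.+2 dnet_size dnet_rho dnet_weight dnet_bias x = tan_pre D 0.
Proof.
have sizeE : dnet_size D.+1 = 4%N by rewrite /dnet_size ltnn eqxx.
have biasE : dnet_bias D.+2 0 = 0 by rewrite /dnet_bias; case_ifs.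
have weightE p : dnet_weight D.+2 0 p = polar_sign p / 4.
  by rewrite /dnet_weight; case_ifs.
change (\sum_(p < dnet_size D.+1) dnet_weight D.+2 0 p * NN D.+1 p + dnet_bias D.+2 0
  = tan_pre D 0).
rewrite sizeE biasE addr0.
under eq_bigr => p _ do rewrite weightE dnet_output_layer // mulrAC.
by rewrite -mulr_suml polarization mulr1 mulrC mulKf.
Qed.

End DerivativeNetwork.

Lemma dnet_size_le D n W : (2 <= D)%N -> (1 <= W)%N ->
  (forall l, (l <= D)%N -> (n l <= W)%N) ->
  forall l, (l <= D + 2)%N -> (dnet_size D n l <= (D + 2) * W)%N.
Proof.
move=> D2 W1 nW l lD.
have W4 : (4 * W <= (D + 2) * W)%N by nia.
have W5 : (3 <= D)%N -> (5 * W <= (D + 2) * W)%N by nia.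
have W6 : (4 <= D)%N -> (6 * W <= (D + 2) * W)%N by nia.
case: l lD => [|l] lD; first by have := nW 0%N; rewrite /dnet_size /=; lia.
have := nW l.+1; have := nW l.
rewrite /dnet_size /prod_offset /ncopy /nlower /nprod /=; case_ifs; lia.
Qed.

Lemma dnet_rho_mem D n rho (Phi Phi' : seq nat) :
  (forall k, k \in Phi -> [/\ (2 <= k)%N, k \in Phi' & k.-1 \in Phi']) -> 2%N \in Phi' ->
  (forall l q, (1 <= l < D)%N -> (q < n l)%N -> rho l q \in Phi) ->
  forall l q, dnet_rho D n rho l q \in Phi'.
Proof.
move=> hPhi two_in rhoPhi l q; rewrite /dnet_rho.
case: ifP => // /andP[l1 _]; case: ifPn => [qc|qc]; last case: ifPn => // ql.
  have [lD qn] : (l < D)%N /\ (q < n l)%N.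
    by move: qc; rewrite /ncopy; case: ifP => // *; split; lia.
  by have /hPhi[] : rho l q \in Phi by apply: rhoPhi; rewrite ?l1.
have [lD qn] : (l < D)%N /\ (q - ncopy D n l < n l)%N.
  by move: qc ql; rewrite /prod_offset /nlower; case: ifP => // *; split; lia.
by have /hPhi[] : rho l (q - ncopy D n l)%N \in Phi by apply: rhoPhi; rewrite ?l1.
Qed.

Lemma implements_with_cst {R : realType} d Wd (Phi : seq nat) (v : 'rV[R]_d -> R) (c : R) :
  (d <= Wd)%N -> (1 <= Wd)%N -> 2%N \in Phi -> (forall y, v y = c) ->
  implements_with d 3 Wd Phi (fun l => if l == 0%N then d else 1%N) (fun _ _ => 2%N) v.
Proof.
move=> dW W1 two_in vc; do 3 split => //.
split; first by case.
split=> //; exists (fun _ _ _ => 0), (fun l _ => if l == 3%N then c else 0) => y.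
by rewrite vc /net_out big1 ?add0r // => p _; rewrite mul0r.
Qed.

Theorem implements_partial {R : realType} (Phi Phi' : seq nat) d D W (u : 'rV[R]_d -> R) :
  (forall k, k \in Phi -> [/\ (2 <= k)%N, k \in Phi' & k.-1 \in Phi']) -> 2%N \in Phi' ->
  implements d D W Phi u -> exists n rho, forall i : 'I_d,
    implements_with d (D + 2) ((D + 2) * W) Phi' n rho (partial i u).
Proof.
move=> hPhi two_in [n [rho [D0 [n0 [nD [nW [rhoPhi [A [b u_net]]]]]]]]].
have W1 : (1 <= W)%N by rewrite -nD nW.
have rho_ge2 l q : (1 <= l <= D.-1)%N -> (q < n l)%N -> (2 <= rho l q)%N.
  by move=> lD qn; have [] := hPhi _ (rhoPhi l q ltac:(lia) qn).
have i_lt (i : 'I_d) : (i < n 0)%N by rewrite n0.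
have du i y : partial i u y = tangent_pre n rho A b (coords y) (std_basis i) D 0.
  by apply: partial_net_out.
have [D1|D2] : D = 1%N \/ (2 <= D)%N by lia.
  subst D; exists (fun l => if l == 0%N then d else 1%N), (fun _ _ => 2%N) => i.
  have dW : (d <= W)%N by rewrite -n0 nW.
  apply: (implements_with_cst _ _ _ _ (A 1%N 0%N i)) => //; [lia | lia |].
  by move=> y; rewrite du tangent_pre1_basis.
exists (dnet_size D n), (dnet_rho D n rho) => i.
split; first by rewrite addn_gt0 D0.
split; first by rewrite /dnet_size /= n0.
split; first by rewrite /dnet_size; case_ifs.
split; first exact: dnet_size_le.
split; first by move=> l q _ _; exact: dnet_rho_mem hPhi two_in rhoPhi l q.
exists (dnet_weight D n rho A), (dnet_bias D n A b i) => y.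
by rewrite du addn2 dnet_out.
Qed.

Theorem mainTheorem11 (R : realType) (d D W : nat) (u : 'rV[R]_d -> R) :
  (implements d D W [:: 2%N; 3%N] u ->
   exists n rho, forall i : 'I_d,
     implements_with d (D + 2) ((D + 2) * W) [:: 1%N; 2%N; 3%N] n rho (partial i u))
  /\
  (implements d D W [:: 3%N] u ->
   exists n rho, forall i : 'I_d,
     implements_with d (D + 2) ((D + 2) * W) [:: 2%N; 3%N] n rho (partial i u)).
Proof.
split; apply: implements_partial => // k; rewrite !inE.
  by case/orP=> /eqP ->.
by move/eqP ->.
Qed.
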